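(* Fix an integer $r\geq 1$ and let ${\mathbb{N}^r}^{*}=\mathbb{N}^r\setminus\{0\}$. Let $\alpha\in{\mathbb{N}^r}^{*}$, let $d$ be a non-negative integer with $d<|\alpha|$, let $p$ be a prime, and let $s=\mathrm{ord}_p\gcd(\alpha)$. Then there exists $\nu\in\mathcal{S}_{\alpha,d}$ such that $$\mathrm{ord}_p\frac{p^s((\nu))}{|\nu|}=0$$ if and only if $Q_p(\alpha)>Q_p(d)$.
   Context: $\mathbb{N}=\{0,1,2,\dots\}$. For $\alpha\in\mathbb{N}^r$, $|\alpha|=\alpha_1+\dots+\alpha_r$. For a finitely supported $\nu:{\mathbb{N}^r}^{*}\to\mathbb{N}$ (written $\nu\in\mathbb{N}^{({\mathbb{N}^r}^{*})}$), $|\nu|=\sum_\beta\nu_\beta$ and $((\nu))=|\nu|!/\prod_\beta(\nu_\beta!)$ is the multinomial coefficient. $\mathcal{S}_{\alpha,d}$ is the set of $\nu\in\mathbb{N}^{({\mathbb{N}^r}^{*})}$ with $\sum_\beta\nu_\beta\beta=\alpha$ and $|\nu|>d$ (i.e. factorizations of the monomial $x^\alpha$ into at least $d+1$ non-trivial monomials). For $q\in\mathbb{Q}\setminus\{0\}$, $\mathrm{ord}_p(q)$ is the exponent of $p$ in $q$. For $n\in\mathbb{N}$, $Q_p(n)(t)=a_st^s+\dots+a_0\in\mathbb{Z}[t]$ where $a_s\dots a_0$ are the base-$p$ digits of $n$ ($0\le a_i\le p-1$, $Q_p(n)(p)=n$); for $\alpha\in\mathbb{N}^r$, $Q_p(\alpha)=\sum_{i}Q_p(\alpha_i)$.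 For $P,Q\in\mathbb{Z}[t]$, $P>Q$ means $P(n)>Q(n)$ for all sufficiently large integers $n$. *)

From HB Require Import structures.
From mathcomp Require Import all_boot all_order all_algebra.
From mathcomp Require Import finmap.
Set Implicit Arguments. Unset Strict Implicit. Unset Printing Implicit Defensive.
Import Order.TTheory GRing.Theory Num.Theory.
Local Open Scope fset_scope.

Definition vecN (r : nat) := {ffun 'I_r -> nat}.

Definition vnorm r (a : vecN r) : nat := (\sum_(i < r) a i)%N.

Definition vgcd r (a : vecN r) : nat := \big[gcdn/0%N]_(i < r) a i.

Definition fsN (r : nat) := {fsfun vecN r -> nat with 0%N}.

Definition fsnorm r (nu : fsN r) : nat := (\sum_(b <- finsupp nu) nu b)%N.

Definition multinom r (nu : fsN r) : rat :=
  ((fsnorm nu)`!)%:R / (\prod_(b <- finsupp nu) ((nu b)`!)%:R).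

(* S_{alpha,d}: nu supported on N^r \ {0}, sum_beta nu_beta beta = alpha,
   and |nu| > d. *)
Definition S_set r (a : vecN r) (d : nat) : pred (fsN r) :=
  fun nu =>
    [&& nu [ffun => 0%N] == 0%N,
        [forall i : 'I_r, (\sum_(b <- finsupp nu) nu b * b i)%N == a i]
      & (d < fsnorm nu)%N].

(* ord_p of a rational q (0 for q = 0, but only used at q <> 0) *)
Definition ordp (p : nat) (q : rat) : int :=
  (logn p `|numq q|%N)%:Z - (logn p (`|denq q|%N))%:Z.

Definition digit (p n i : nat) : nat := ((n %/ p ^ i) %% p)%N.

(* Q_p(n) = a_s t^s + ... + a_0 in Z[t]; digits of index > n vanish. *)
Definition Qp (p n : nat) : {poly int} :=
  \sum_(i < n.+1) ((digit p n i)%:Z)%:P * 'X^i.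

Definition Qpv (p : nat) r (a : vecN r) : {poly int} := \sum_(i < r) Qp p (a i).

Definition poly_gt (P Q : {poly int}) : Prop :=
  (exists N : int, forall n : int, N <= n -> Q.[n] < P.[n])%R.

(* Writing Q_p(m)(T) = m + (T - p) * sum_k (m %/ p^(k+1)) T^k shows that Q_p(m)(T) is
   monotone and superadditive in m for T >= p, and that its coefficients are the terms of
   Legendre's formula for ord_p m!.  By Legendre, ord_p (p^s ((nu)) / |nu|) is the number of
   carries in the base-p addition of the multiplicities of nu, minus those forced by the fact
   that all multiplicities are divisible by p^u, u <= s being their least valuation.  Hence
   the valuation vanishes iff u = s and every carry is forced, i.e. iff
   sum_c (c mod p^(k+1)) <= p^(k+1) for all k.
   Forward: this bound gives Q_p(|nu| - 1) < sum_beta Q_p(nu_beta) at every T >= p, and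
   sum_beta Q_p(nu_beta) <= Q_p(alpha) by superadditivity, while Q_p(d) <= Q_p(|nu| - 1).
   Backward: at a large integer T, Q_p(alpha)(T) > Q_p(d)(T) compares the column sums c_t of
   the base-p digits of the alpha_i lexicographically with the digits of d; let j be the top
   position where c_j > d_j.  Take nu with the vector (alpha - W) / p^s of multiplicity p^s
   and the unit vectors e_i of multiplicity W_i, the base-p digits of the W_i being those of
   alpha above j, part of column j, and a chain of digits p - 1 on [s, j) that makes
   p^s + sum_i W_i carry up to p^j; then no unforced carry occurs and |nu| > d. *)

From HB Require Import structures.
From mathcomp Require Import all_boot all_order all_algebra.
From mathcomp Require Import finmap.
From mathcomp Require Import zify ring.
Import Order.TTheory GRing.Theory Num.Theory.
Set Implicit Arguments. Unset Strict Implicit. Unset Printing Implicit Defensive.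

Lemma sum_divn_modn (I : Type) (s : seq I) (F : I -> nat) q :
  (\sum_(x <- s) F x = (\sum_(x <- s) F x %/ q) * q + \sum_(x <- s) F x %% q)%N.
Proof. by rewrite big_distrl -big_split; apply: eq_bigr => x _; apply: divn_eq. Qed.

Lemma eq_from_sum_leq (I : eqType) (s : seq I) (F G : I -> nat) :
  (forall x, x \in s -> F x <= G x)%N ->
  (\sum_(x <- s) G x <= \sum_(x <- s) F x)%N -> forall x, x \in s -> F x = G x.
Proof.
move=> leFG leGF x xs; apply/eqP; rewrite eqn_leq leFG //=.
have : (\sum_(y <- s | y \in s) (G y - F y) == 0)%N.
  by rewrite sumnB -?big_seq ?subn_eq0.
by rewrite -big_seq (big_rem x) //= addn_eq0 subn_eq0 => /andP[].
Qed.

Lemma Posz_sum (I : Type) (s : seq I) (F : I -> nat) :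
  ((\sum_(x <- s) F x)%N%:Z = \sum_(x <- s) (F x)%:Z)%R.
Proof. by rewrite -natz natr_sum; apply: eq_bigr => x _; rewrite natz. Qed.

Section QpEvaluation.
Variable p : nat.
Hypothesis p_pr : prime p.
Local Open Scope ring_scope.

Lemma ltn_pexp m n : (m <= n)%N -> (m < p ^ n)%N.
Proof. by move=> le_mn; rewrite (leq_ltn_trans le_mn) // ltn_expl ?prime_gt1. Qed.

Lemma divn_pexp_small m k : (m <= k)%N -> (m %/ p ^ k.+1 = 0)%N.
Proof. by move=> le_mk; rewrite divn_small // ltn_pexp // leqW. Qed.

Lemma Qp_hornerE (T : int) m K : (m <= K)%N ->
  (Qp p m).[T] = m%:Z + (T - p%:Z) * \sum_(k < K) (m %/ p ^ k.+1)%:Z * T ^+ k.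
Proof.
move=> le_mK.
have digitE i : (digit p m i)%:Z = (m %/ p ^ i)%:Z - p%:Z * (m %/ p ^ i.+1)%:Z.
  rewrite /digit expnSr divnMA; set a := (m %/ p ^ i)%N.
  have -> : (a %% p = a - p * (a %/ p))%N by have := divn_eq a p; lia.
  by rewrite subzn // mulnC leq_trunc_div.
have telescope n : \sum_(i < n.+1) (digit p m i)%:Z * T ^+ i =
    m%:Z + (T - p%:Z) * \sum_(k < n) (m %/ p ^ k.+1)%:Z * T ^+ k
    - p%:Z * (m %/ p ^ n.+1)%:Z * T ^+ n.
  elim: n => [|n IHn]; first by rewrite big_ord1 big_ord0 digitE expn0 divn1 expr0; ring.
  by rewrite big_ord_recr /= IHn big_ord_recr /= digitE exprS; ring.
rewrite /Qp horner_sum (eq_bigr (fun i : 'I_m.+1 => (digit p m i)%:Z * T ^+ i)); last first.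
  by move=> i _; rewrite hornerCM hornerXn.
rewrite telescope divn_pexp_small // mulr0 mul0r subr0; congr (_ + _ * _).
rewrite -(subnKC le_mK) big_split_ord /= [X in _ = _ + X]big1 ?addr0 // => k _.
by rewrite divn_pexp_small ?leq_addr ?mul0r.
Qed.

Lemma Qp_horner0 (T : int) : (Qp p 0).[T] = 0.
Proof. by rewrite (Qp_hornerE T (leqnn 0)) big_ord0 mulr0 addr0. Qed.

Variable T : int.
Hypothesis le_pT : p%:Z <= T.

Let T_ge0 : 0 <= T. Proof. exact: le_trans le_pT. Qed.

Lemma ler_wsum_pow K (f g : nat -> nat) : (forall k, f k <= g k)%N ->
  \sum_(k < K) (f k)%:Z * T ^+ k <= \sum_(k < K) (g k)%:Z * T ^+ k.
Proof. by move=> le_fg; apply: ler_sum => k _; rewrite ler_wpM2r ?exprn_ge0 ?lez_nat. Qed.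

Lemma Qp_horner_le m n : (m <= n)%N -> (Qp p m).[T] <= (Qp p n).[T].
Proof.
move=> le_mn; rewrite (Qp_hornerE T le_mn) (Qp_hornerE T (leqnn n)).
rewrite lerD ?lez_nat // ler_wpM2l ?subr_ge0 //.
apply: (@ler_wsum_pow n (fun k => m %/ p ^ k.+1)%N (fun k => n %/ p ^ k.+1)%N) => k.
exact: leq_div2r.
Qed.

Lemma Qp_horner_add m n : (Qp p m).[T] + (Qp p n).[T] <= (Qp p (m + n)).[T].
Proof.
rewrite (Qp_hornerE T (leq_addr n m)) (Qp_hornerE T (leq_addl m n)) (Qp_hornerE T (leqnn _)).
rewrite addrACA -mulrDr -big_split /= PoszD lerD2l ler_wpM2l ?subr_ge0 //.
rewrite -(eq_bigr _ (fun k _ => mulrDl _ _ _)) /=.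
apply: (@ler_wsum_pow _ (fun k => m %/ p ^ k.+1 + n %/ p ^ k.+1)%N
                        (fun k => (m + n) %/ p ^ k.+1)%N) => k.
by rewrite divnD ?expn_gt0 ?prime_gt0 // leq_addr.
Qed.

Lemma Qp_horner_sum (I : Type) (s : seq I) (F : I -> nat) :
  \sum_(x <- s) (Qp p (F x)).[T] <= (Qp p (\sum_(x <- s) F x)%N).[T].
Proof.
elim: s => [|x s IHs]; first by rewrite !big_nil Qp_horner0.
by rewrite !big_cons (le_trans _ (Qp_horner_add _ _)) // lerD2l.
Qed.

Lemma Qp_horner_pred_lt (cs : seq nat) : (0 < \sum_(c <- cs) c)%N ->
  (forall k, \sum_(c <- cs) c %% p ^ k.+1 <= p ^ k.+1)%N ->
  (Qp p (\sum_(c <- cs) c).-1).[T] < \sum_(c <- cs) (Qp p c).[T].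
Proof.
set n := (\sum_(c <- cs) c)%N => n_gt0 small_rem.
have le_cn c : c \in cs -> (c <= n)%N by move=> cs_c; rewrite /n (big_rem c) ?leq_addr.
rewrite big_seq (eq_bigr _ (fun c cs_c => Qp_hornerE T (le_cn c cs_c))) -big_seq.
rewrite (Qp_hornerE T (leq_pred n)) big_split /= -big_distrr /= exchange_big /=.
rewrite -Posz_sum -/n.
have -> : Posz n = Posz n.-1 + 1 by rewrite -[1]/(Posz 1) -PoszD addn1 prednK.
rewrite -addrA ltrD2l addrC ltzD1 ler_wpM2l ?subr_ge0 //.
apply: ler_sum => k _; rewrite -mulr_suml -Posz_sum ler_wpM2r ?exprn_ge0 // lez_nat.
have q_gt0 : (0 < p ^ k.+1)%N by rewrite expn_gt0 prime_gt0.
(* As [n = (sum c %/ q) * q + sum c %% q], [sum c %% q <= q] iff [n.-1 %/ q <= sum c %/ q]. *)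
have /= := @sum_divn_modn _ cs (fun c => c) (p ^ k.+1); rewrite -/n.
rewrite -ltnS ltn_divLR // mulSn; have := small_rem k; lia.
Qed.

End QpEvaluation.

Lemma sum_ord_in_range K u e : e <= K -> \sum_(k < K) (u <= k < e) = e - u.
Proof.
move=> le_eK; suff -> : \sum_(k < K) (u <= k < e) = minn K e - u by lia.
by elim: K {le_eK} => [|K IHK]; rewrite ?big_ord0 ?min0n // big_ord_recr /= IHK; lia.
Qed.

(* The carry out of position [k] when the elements of [cs] are added in base [p]. *)
Definition carry p k (cs : seq nat) := (\sum_(c <- cs) c %% p ^ k.+1) %/ p ^ k.+1.

Section Legendre.
Variable p : nat.
Hypothesis p_pr : prime p.

Let pexp_gt0 k : 0 < p ^ k. Proof. by rewrite expn_gt0 prime_gt0. Qed.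

Lemma logn_fact_sum m K : m <= K -> logn p m`! = \sum_(k < K) m %/ p ^ k.+1.
Proof.
move=> le_mK; rewrite logn_fact // big_add1 /= big_mkord -(subnKC le_mK) big_split_ord /=.
by rewrite [X in _ = _ + X]big1 ?addn0 // => k _; rewrite divn_pexp_small ?leq_addr.
Qed.

Lemma logn_fact_add m n : logn p m`! + logn p n`! <= logn p (m + n)`!.
Proof.
rewrite (logn_fact_sum (leq_addr n m)) (logn_fact_sum (leq_addl m n)).
rewrite (logn_fact_sum (leqnn _)) -big_split leq_sum // => k _.
by rewrite divnD // leq_addr.
Qed.

Lemma logn_fact_big_le (I : Type) (s : seq I) (P : pred I) (F : I -> nat) :
  \sum_(x <- s | P x) logn p (F x)`! <= logn p (\sum_(x <- s | P x) F x)`!.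
Proof.
elim: s => [|x s IHs]; rewrite ?big_nil // !big_cons; case: (P x) => //.
by rewrite (leq_trans _ (logn_fact_add _ _)) // leq_add2l.
Qed.

Lemma logn_fact_sum_carry (cs : seq nat) :
  logn p (\sum_(c <- cs) c)`! =
  \sum_(c <- cs) logn p c`! + \sum_(k < \sum_(c <- cs) c) carry p k cs.
Proof.
set n := \sum_(c <- cs) c.
rewrite big_seq (eq_bigr (fun c => \sum_(k < n) c %/ p ^ k.+1)); last first.
  by move=> c cs_c; rewrite (logn_fact_sum (K := n)) // /n (big_rem c) ?leq_addr.
rewrite -big_seq exchange_big -big_split (logn_fact_sum (leqnn n)) /=.
by apply: eq_bigr => k _; rewrite {1}/n (sum_divn_modn _ _ (p ^ k.+1)) divnMDl.
Qed.

Section MinimalValuation.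
Variables (cs : seq nat) (u c0 : nat).
Hypothesis dvd_cs : forall c, c \in cs -> p ^ u %| c.
Hypothesis cs_c0 : c0 \in cs.
Hypothesis ndvd_c0 : ~~ (p ^ u.+1 %| c0).
Let n := \sum_(c <- cs) c.

Lemma sum_gt0_min_valuation : 0 < n.
Proof.
rewrite /n (big_rem c0) // (leq_trans _ (leq_addr _ _)) // lt0n.
by apply: contra ndvd_c0 => /eqP ->; rewrite dvdn0.
Qed.

Let rem_dvd k : (p ^ k.+1 %| \sum_(c <- cs) c %% p ^ k.+1) = (k < logn p n).
Proof.
rewrite -pfactor_dvdn ?sum_gt0_min_valuation // [in RHS]/n.
rewrite [in RHS](sum_divn_modn _ _ (p ^ k.+1)).
by rewrite dvdn_addr // dvdn_mull.
Qed.

Let rem_eq0 k : (\sum_(c <- cs) c %% p ^ k.+1 == 0) = (k < u).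
Proof.
case: (ltnP k u) => [lt_ku|le_uk].
  rewrite big_seq big1 // => c /dvd_cs dvd_c; apply/eqP; change (p ^ k.+1 %| c).
  by apply: dvdn_trans dvd_c; rewrite dvdn_exp2l.
rewrite (big_rem c0) // addn_eq0 -/(dvdn _ c0); apply/nandP; left.
by apply: contra ndvd_c0; apply: dvdn_trans; rewrite dvdn_exp2l.
Qed.

Lemma carry_ge k : (u <= k < logn p n) <= carry p k cs.
Proof.
rewrite /carry; case: (leqP u k) => //= le_uk; case: (ltnP k (logn p n)) => //= lt_kn.
have R_gt0 : 0 < \sum_(c <- cs) c %% p ^ k.+1 by rewrite lt0n rem_eq0 -leqNgt.
by rewrite divn_gt0 // dvdn_leq // rem_dvd.
Qed.

Lemma carry_le_range k :
  (carry p k cs <= (u <= k < logn p n)) = (\sum_(c <- cs) c %% p ^ k.+1 <= p ^ k.+1).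
Proof.
rewrite /carry; set q := p ^ k.+1; set R := \sum_(c <- cs) c %% q.
have q_gt0 : 0 < q := pexp_gt0 _.
case: (ltnP k u) => [lt_ku|le_uk].
  by move: (rem_eq0 k); rewrite -/q -/R lt_ku => /eqP ->; rewrite div0n.
case: (ltnP k (logn p n)) => /= lt_kn.
  have /dvdnP[m ->] : q %| R by rewrite rem_dvd.
  by rewrite mulnK // -{2}[q]mul1n leq_pmul2r.
rewrite leqNgt divn_gt0 // -ltnNge ltn_neqAle; case: eqP => // R_q.
by move: (rem_dvd k); rewrite -/q -/R R_q dvdnn ltnNge lt_kn.
Qed.

Let logn_le_n : logn p n <= n. Proof. exact/ltnW/ltn_logl/sum_gt0_min_valuation. Qed.

Lemma logn_fact_sum_ge : \sum_(c <- cs) logn p c`! + (logn p n - u) <= logn p n`!.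
Proof.
rewrite logn_fact_sum_carry -(sum_ord_in_range u logn_le_n) leq_add2l.
by apply: leq_sum => k _; apply: carry_ge.
Qed.

Lemma logn_fact_sum_eqP :
  \sum_(c <- cs) logn p c`! + (logn p n - u) = logn p n`! <->
  forall k, \sum_(c <- cs) c %% p ^ k.+1 <= p ^ k.+1.
Proof.
rewrite logn_fact_sum_carry -(sum_ord_in_range u logn_le_n); split => [/addnI eq_sum k|small_rem].
  case: (ltnP k n) => [lt_kn|le_nk]; last first.
    apply/ltnW/ltn_pexp/leqW/(leq_trans _ le_nk) => //.
    by rewrite /n leq_sum // => c _; apply: leq_mod.
  rewrite -carry_le_range (@eq_from_sum_leq _ (index_enum 'I_n) (fun k : 'I_n => u <= k < logn p n)
    (fun k => carry p k cs) _ _ (Ordinal lt_kn)) ?mem_index_enum //.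
  - by move=> i _; apply: carry_ge.
  - by rewrite eq_sum.
congr (_ + _); apply: eq_bigr => k _; apply/eqP; rewrite eqn_leq carry_ge.
by rewrite carry_le_range small_rem.
Qed.

End MinimalValuation.
End Legendre.

Definition radix b K (f : nat -> nat) := \sum_(t < K) f t * b ^ t.

Section Radix.
Variable b : nat.
Hypothesis b_gt0 : 0 < b.

Lemma radixS K f : radix b K.+1 f = radix b K f + f K * b ^ K.
Proof. by rewrite /radix big_ord_recr. Qed.

Lemma leq_radix K f g : (forall t, t < K -> f t <= g t) -> radix b K f <= radix b K g.
Proof. by move=> le_fg; apply: leq_sum => t _; rewrite leq_mul2r le_fg ?orbT. Qed.

Lemma eq_radix K f g : (forall t, t < K -> f t = g t) -> radix b K f = radix b K g.
Proof. by move=> eq_fg; apply: eq_bigr => t _; rewrite eq_fg. Qed.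

Lemma radixD K f g : radix b K (fun t => f t + g t) = radix b K f + radix b K g.
Proof. by rewrite /radix -big_split; apply: eq_bigr => t _; rewrite mulnDl. Qed.

Lemma radixMn K c f : radix b K (fun t => c * f t) = c * radix b K f.
Proof. by rewrite /radix big_distrr; apply: eq_bigr => t _; rewrite /= mulnA. Qed.

Lemma radix_sum (I : finType) K (f : I -> nat -> nat) :
  \sum_i radix b K (f i) = radix b K (fun t => \sum_i f i t).
Proof. by rewrite /radix exchange_big; apply: eq_bigr => t _; rewrite big_distrl. Qed.

Lemma radix_delta K j : j < K -> radix b K (fun t => t == j) = b ^ j.
Proof.
move=> lt_jK; rewrite /radix (bigD1 (Ordinal lt_jK)) //= eqxx mul1n big1 ?addn0 //.
move=> t /eqP ne_tj; rewrite (_ : (t == j :> nat) = false) //.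
by apply/eqP => eq_tj; apply: ne_tj; apply: ord_inj.
Qed.

Lemma radix_trunc m K f : m <= K -> (forall t, m <= t < K -> f t = 0) ->
  radix b K f = radix b m f.
Proof.
move=> le_mK f0; rewrite /radix -(subnKC le_mK) big_split_ord /= [X in _ + X]big1 ?addn0 // => t _.
by rewrite f0 ?mul0n // leq_addr /= -{2}(subnKC le_mK) ltn_add2l.
Qed.

Lemma radix_geom s m : s <= m -> radix b m (fun t => (s <= t) * b.-1) + b ^ s = b ^ m.
Proof.
elim: m => [|m IHm]; first by case: s => // _; rewrite /radix big_ord0.
rewrite leq_eqVlt ltnS => /orP[/eqP <-|le_sm].
  rewrite (@radix_trunc 0) // => [|t /andP[_ lt_ts]]; first by rewrite /radix big_ord0.
  by rewrite leqNgt lt_ts.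
rewrite radixS addnAC IHm // le_sm mul1n expnS -[X in X + _]mul1n -mulnDl add1n prednK // mulnC.
Qed.

Lemma radix_lt m f : (forall t, t < m -> f t < b) -> radix b m f < b ^ m.
Proof.
move=> lt_fb; rewrite -(radix_geom (leq0n m)) expn0 addn1 ltnS.
by apply: leq_radix => t /lt_fb lt_ftb; rewrite /= mul1n -ltnS prednK.
Qed.

Lemma radix_mod m K f : (forall t, t < K -> f t < b) -> m <= K ->
  radix b K f %% b ^ m = radix b m f.
Proof.
move=> lt_fb le_mK; rewrite /radix -(subnKC le_mK) big_split_ord /= addnC.
rewrite (_ : \sum_(t < K - m) _ = (\sum_(t < K - m) f (m + t) * b ^ t) * b ^ m).
  by rewrite modnMDl modn_small // radix_lt // => t lt_tm; rewrite lt_fb ?(leq_trans lt_tm).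
by rewrite big_distrl; apply: eq_bigr => t _; rewrite /= expnD mulnA mulnAC.
Qed.

Lemma dvdn_radix s K f : (forall t, t < s -> f t = 0) -> b ^ s %| radix b K f.
Proof.
move=> f0; apply: dvdn_sum => t _; case: (ltnP t s) => [/f0 -> //|le_st].
by rewrite dvdn_mull // dvdn_exp2l.
Qed.

Lemma radix_lt_lex K f g : (forall t, t < K -> f t < b) -> (forall t, t < K -> g t < b) ->
  radix b K f < radix b K g ->
  exists2 j, j < K & f j < g j /\ forall t, j < t < K -> f t = g t.
Proof.
elim: K => [|K IHK] lt_fb lt_gb; first by rewrite /radix !big_ord0.
rewrite !radixS; case: (ltngtP (f K) (g K)) => [lt_fgK|lt_gfK|eq_fgK] lt_fg.
- by exists K => //; split=> // t /andP[lt_Kt]; rewrite ltnS leqNgt lt_Kt.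
- have : g K * b ^ K + b ^ K <= f K * b ^ K by rewrite addnC -mulSn leq_mul2r lt_gfK orbT.
  have := @radix_lt K g (fun t lt_tK => lt_gb t (ltnW lt_tK)); lia.
have [|||j lt_jK [lt_fgj eq_fg]] := IHK; try by move=> t /ltnW; auto.
  by rewrite eq_fgK ltn_add2r in lt_fg.
exists j; [exact: ltnW | split => // t /andP[lt_jt]].
by rewrite ltnS leq_eqVlt => /orP[/eqP -> //|lt_tK]; rewrite eq_fg ?lt_jt.
Qed.

Lemma lex_radix_lt K j f g : (forall t, t < K -> f t < b) -> j < K -> f j < g j ->
  (forall t, j < t < K -> f t <= g t) -> radix b K f < radix b K g.
Proof.
elim: K => [//|K IHK] lt_fb lt_jK lt_fgj le_fg; rewrite !radixS.
move: lt_jK; rewrite ltnS leq_eqVlt => /orP[/eqP eq_jK|lt_jK].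
  have : f K * b ^ K + b ^ K <= g K * b ^ K by rewrite addnC -mulSn leq_mul2r -eq_jK lt_fgj orbT.
  have := @radix_lt K f (fun t lt_tK => lt_fb t (ltnW lt_tK)); lia.
rewrite -addSn leq_add ?leq_mul2r ?le_fg ?lt_jK ?ltnSn ?orbT //.
apply: IHK => // [t /ltnW|t /andP[lt_jt lt_tK]]; first exact: lt_fb.
by apply: le_fg; rewrite lt_jt ltnS ltnW.
Qed.

End Radix.

Section Digits.
Variable p : nat.
Hypothesis p_pr : prime p.

Lemma digit_lt x t : digit p x t < p.
Proof. by rewrite ltn_mod prime_gt0. Qed.

Lemma radix_digit_mod x m : x %% p ^ m = radix p m (digit p x).
Proof.
elim: m => [|m IHm]; first by rewrite expn0 modn1 /radix big_ord0.
have P_gt0 : 0 < p ^ m by rewrite expn_gt0 prime_gt0.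
rewrite radixS -IHm; have := digit_lt x m; rewrite /digit.
set P := p ^ m; set y := x %/ P => lt_yp.
have x_eq : x = y %/ p * (p * P) + (x %% P + y %% p * P).
  by rewrite {1}(divn_eq x P) -/y {1}(divn_eq y p); ring.
rewrite expnS -/P {1}x_eq modnMDl modn_small //.
have := ltn_pmod x P_gt0; nia.
Qed.

Lemma digit_small x t : x < p ^ t -> digit p x t = 0.
Proof. by move=> lt_x; rewrite /digit divn_small ?mod0n. Qed.

Lemma radix_digit x K : x < p ^ K -> radix p K (digit p x) = x.
Proof. by move=> lt_x; rewrite -radix_digit_mod modn_small. Qed.

Lemma digit_dvd x s t : p ^ s %| x -> t < s -> digit p x t = 0.
Proof.
move=> dvd_x lt_ts; apply/eqP; change (p %| x %/ p ^ t).
have dvd_t : p ^ t %| x by apply: dvdn_trans dvd_x; rewrite dvdn_exp2l // ltnW.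
by rewrite dvdn_divRL // -expnS (dvdn_trans _ dvd_x) // dvdn_exp2l.
Qed.

Lemma Qp_horner_radix m K (T : nat) : m < K ->
  ((Qp p m).[T%:Z] = (radix T K (digit p m))%:Z)%R.
Proof.
move=> lt_mK; rewrite (@radix_trunc _ m.+1) // => [|t /andP[lt_mt _]].
  rewrite /Qp horner_sum /radix Posz_sum; apply: eq_bigr => i _.
  by rewrite hornerCM hornerXn PoszM -!natz natrX.
by apply/digit_small/ltn_pexp/ltnW.
Qed.

End Digits.

Lemma ordp_ratio p a b : 0 < a -> 0 < b ->
  ordp p (a%:R / b%:R) = ((logn p a)%:Z - (logn p b)%:Z)%R.
Proof.
move=> a_gt0 b_gt0; set x : rat := (a%:R / b%:R)%R.
have x_neq0 : x != 0%R by rewrite mulf_neq0 ?invr_eq0 ?pnatr_eq0 -?lt0n.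
have : (numq x * b%:Z = a%:Z * denq x)%R.
  apply: (@intr_inj rat); rewrite !intrM (numqE x) /x !pmulrn.
  by field; rewrite pnatr_eq0 -lt0n.
move=> /(congr1 absz); rewrite !abszM /= => /(congr1 (logn p)).
have num_gt0 : 0 < `|numq x| by rewrite absz_gt0 numq_eq0.
have den_gt0 : 0 < `|denq x| by rewrite absz_gt0 denq_eq0.
rewrite !lognM // /ordp; lia.
Qed.

Lemma ordp_multinom_eq0 p r (nu : fsN r) s : prime p -> 0 < fsnorm nu ->
  ordp p (((p ^ s)%:R * multinom nu) / (fsnorm nu)%:R)%R = 0%R <->
  s + logn p (fsnorm nu)`! = \sum_(b <- finsupp nu) logn p (nu b)`! + logn p (fsnorm nu).
Proof.
move=> p_pr N_gt0; set P := \prod_(b <- finsupp nu) (nu b)`!.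
have P_gt0 : 0 < P by rewrite prodn_gt0 // => b; apply: fact_gt0.
have -> : (((p ^ s)%:R * multinom nu) / (fsnorm nu)%:R =
    (p ^ s * (fsnorm nu)`!)%:R / (P * fsnorm nu)%:R :> rat)%R.
  rewrite /multinom -natr_prod !natrM.
  by field; rewrite !pnatr_eq0 -!lt0n N_gt0 P_gt0.
have ps_gt0 : 0 < p ^ s by rewrite expn_gt0 prime_gt0.
rewrite ordp_ratio ?muln_gt0 ?ps_gt0 ?fact_gt0 ?P_gt0 //.
rewrite !lognM ?fact_gt0 // pfactorK // /P.
have logn_prod (X : seq (vecN r)) :
    logn p (\prod_(b <- X) (nu b)`!) = \sum_(b <- X) logn p (nu b)`!.
  elim: X => [|b X IHX]; first by rewrite !big_nil logn1.
  by rewrite !big_cons lognM ?IHX ?fact_gt0 // prodn_gt0 // => c; apply: fact_gt0.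
by rewrite logn_prod; split => [/eqP|->]; rewrite ?subrr // subr_eq0 => /eqP[].
Qed.

Section FsfunOfPairs.
Local Open Scope fset_scope.
Variables (r : nat) (kv : seq (vecN r * nat)).

Definition pairs_keys : {fset vecN r} := [fset x.1 | x in kv].

Definition fsfun_of_pairs : fsN r :=
  [fsfun b in pairs_keys => \sum_(x <- kv | x.1 == b) x.2].

Let mem_pairs_keys x : x \in kv -> x.1 \in pairs_keys.
Proof. by move=> kv_x; apply/imfsetP; exists x. Qed.

Lemma fsfun_of_pairsE b : fsfun_of_pairs b = \sum_(x <- kv | x.1 == b) x.2.
Proof.
rewrite fsfunE; case: ifP => // b_keys.
rewrite big_seq_cond big1 // => x /andP[kv_x /eqP x1_b].
by move: b_keys; rewrite -x1_b mem_pairs_keys.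
Qed.

Let big_finsupp_pairs (G : vecN r -> nat -> nat) : (forall b, G b 0 = 0) ->
  \sum_(b <- finsupp fsfun_of_pairs) G b (fsfun_of_pairs b) =
  \sum_(b <- pairs_keys) G b (fsfun_of_pairs b).
Proof.
move=> G0; apply: big_fset_incl => [|b _]; last first.
  by rewrite mem_finsupp negbK => /eqP ->.
apply/fsubsetP => b; rewrite mem_finsupp; apply: contraR => b_keys.
by rewrite fsfunE (negPf b_keys).
Qed.

Let big_pairs_keys (H : vecN r * nat -> nat) :
  \sum_(b <- pairs_keys) \sum_(x <- kv | x.1 == b) H x = \sum_(x <- kv) H x.
Proof.
under eq_bigr do rewrite big_mkcond.
rewrite exchange_big; apply: eq_big_seq => x kv_x /=.
rewrite (bigD1_seq x.1) ?mem_pairs_keys ?fset_uniq //= eqxx big1 ?addn0 // => b.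
by rewrite eq_sym => /negPf ->.
Qed.

Lemma sum_fsfun_of_pairs (g : vecN r -> nat) :
  \sum_(b <- finsupp fsfun_of_pairs) fsfun_of_pairs b * g b = \sum_(x <- kv) x.2 * g x.1.
Proof.
rewrite (@big_finsupp_pairs (fun b v => v * g b)) // -big_pairs_keys.
apply: eq_bigr => b _; rewrite fsfun_of_pairsE big_distrl.
by apply: eq_bigr => x /eqP ->.
Qed.

Lemma logn_fact_pairs_le p : prime p ->
  \sum_(x <- kv) logn p x.2`! <= \sum_(b <- finsupp fsfun_of_pairs) logn p (fsfun_of_pairs b)`!.
Proof.
move=> p_pr; rewrite (@big_finsupp_pairs (fun b v => logn p v`!)) => [|b]; last first.
  by rewrite fact0 logn1.
rewrite -(@big_pairs_keys (fun x => logn p x.2`!)).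
by apply: leq_sum => b _; rewrite fsfun_of_pairsE logn_fact_big_le.
Qed.

End FsfunOfPairs.

Lemma dvdn_vgcd r (alpha : vecN r) i : vgcd alpha %| alpha i.
Proof. exact: (@biggcdn_inf _ i xpredT alpha (alpha i) isT (dvdnn _)). Qed.

Lemma vgcd_gt0 r (alpha : vecN r) : alpha != [ffun => 0] -> 0 < vgcd alpha.
Proof.
move=> alpha_neq0; rewrite lt0n; apply: contra alpha_neq0 => /eqP gcd0.
by apply/eqP/ffunP => i; rewrite ffunE; apply/eqP; rewrite -dvd0n -gcd0 dvdn_vgcd.
Qed.

Lemma leq_vnorm r (alpha : vecN r) i : alpha i <= vnorm alpha.
Proof. by rewrite /vnorm (bigD1 i) //= leq_addr. Qed.

Definition mults r (nu : fsN r) : seq nat := [seq nu b | b <- finsupp nu].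

Definition p_unit_factorization p r (alpha : vecN r) d : Prop :=
  exists nu : fsN r, S_set alpha d nu /\
    ordp p (((p ^ logn p (vgcd alpha))%:R * multinom nu) / (fsnorm nu)%:R)%R = 0%R.

Section Factorization.
Variables (p r : nat) (alpha : vecN r) (nu : fsN r).
Hypothesis p_pr : prime p.
Hypothesis alpha_neq0 : alpha != [ffun => 0].
Hypothesis nu_sum : forall i, \sum_(b <- finsupp nu) nu b * b i = alpha i.
Let s := logn p (vgcd alpha).

Lemma exists_min_valuation : exists u c0, [/\ u <= s,
  forall c, c \in mults nu -> p ^ u %| c, c0 \in mults nu & ~~ (p ^ u.+1 %| c0)].
Proof.
have supp_gt0 b : b \in finsupp nu -> 0 < nu b by rewrite mem_finsupp lt0n.
have [b0 supp_b0] : exists b0, b0 \in finsupp nu.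
  case: (finsupp nu =P fset0) => [supp0|/eqP/fset0Pn //].
  have : alpha == [ffun => 0].
    by apply/eqP/ffunP => i; rewrite ffunE -nu_sum supp0 big_seq_fset0.
  by rewrite (negPf alpha_neq0).
have ex_val : exists u, has (fun b => logn p (nu b) == u) (finsupp nu).
  by exists (logn p (nu b0)); apply/hasP; exists b0.
case: (ex_minnP ex_val) => u /hasP[b1 supp_b1 /eqP val_b1] min_u.
have dvd_u b : b \in finsupp nu -> p ^ u %| nu b.
  by move=> supp_b; rewrite pfactor_dvdn ?supp_gt0 ?min_u //; apply/hasP; exists b.
exists u, (nu b1); split.
- rewrite -pfactor_dvdn ?vgcd_gt0 //; apply/dvdn_biggcdP => i _.
  by rewrite -nu_sum big_seq dvdn_sum // => b /dvd_u /dvdn_mulr.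
- by move=> c /mapP[b supp_b ->]; apply: dvd_u.
- exact: map_f.
- by rewrite pfactor_dvdn ?supp_gt0 // val_b1 ltnn.
Qed.

Lemma logn_fact_fsnorm_ge :
  \sum_(b <- finsupp nu) logn p (nu b)`! + (logn p (fsnorm nu) - s) <= logn p (fsnorm nu)`!.
Proof.
have [u [c0 [le_us dvd_u mults_c0 ndvd_c0]]] := exists_min_valuation.
have := logn_fact_sum_ge p_pr dvd_u mults_c0 ndvd_c0; rewrite !big_map -/(fsnorm nu); lia.
Qed.

Hypothesis nu0 : nu [ffun => 0] = 0.

Lemma sum_Qp_horner_le (T : int) : (p%:Z <= T)%R ->
  (\sum_(b <- finsupp nu) (Qp p (nu b)).[T] <= (Qpv p alpha).[T])%R.
Proof.
move=> le_pT; rewrite /Qpv horner_sum.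
apply: (@le_trans _ _ (\sum_(i < r) \sum_(b <- finsupp nu) (Qp p (nu b * b i)).[T])%R).
  rewrite exchange_big /= big_seq [X in (_ <= X)%R]big_seq; apply: ler_sum => b supp_b.
  have [i b_i] : exists i, 0 < b i.
    apply/existsP; apply: contraLR supp_b; rewrite negb_exists mem_finsupp negbK => /forallP b0.
    rewrite (_ : b = [ffun => 0]) ?nu0 //.
    by apply/ffunP => i; rewrite ffunE; apply/eqP; rewrite eqn0Ngt b0.
  rewrite (bigD1 i) //= (le_trans (Qp_horner_le p_pr le_pT (leq_pmulr _ b_i))) //.
  rewrite lerDl sumr_ge0 // => j _; rewrite -(Qp_horner0 p_pr T).
  exact: Qp_horner_le.
by apply: ler_sum => i _; rewrite -nu_sum; apply: Qp_horner_sum.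
Qed.

End Factorization.

Lemma poly_gt_of_p_unit_factorization r (alpha : vecN r) d p :
  prime p -> alpha != [ffun => 0] ->
  p_unit_factorization p alpha d -> poly_gt (Qpv p alpha) (Qp p d).
Proof.
move=> p_pr alpha_neq0 [nu [/and3P[/eqP nu0 /forallP nu_sum lt_dN]]].
have {}nu_sum i : \sum_(b <- finsupp nu) nu b * b i = alpha i by apply/eqP.
have N_gt0 : 0 < fsnorm nu := leq_ltn_trans (leq0n d) lt_dN.
move=> /(ordp_multinom_eq0 _ p_pr N_gt0) ordp_eq.
have [u [c0 [le_us dvd_u mults_c0 ndvd_c0]]] := exists_min_valuation p_pr alpha_neq0 nu_sum.
have sum_mults : \sum_(c <- mults nu) c = fsnorm nu by rewrite big_map.
have small_rem : forall k, \sum_(c <- mults nu) c %% p ^ k.+1 <= p ^ k.+1.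
  apply/(logn_fact_sum_eqP p_pr dvd_u mults_c0 ndvd_c0).
  have := logn_fact_sum_ge p_pr dvd_u mults_c0 ndvd_c0.
  rewrite sum_mults big_map; lia.
exists (Posz p) => T le_pT.
apply: (le_lt_trans (Qp_horner_le p_pr le_pT (_ : d <= (fsnorm nu).-1))); first lia.
apply: (lt_le_trans _ (sum_Qp_horner_le p_pr nu_sum nu0 le_pT)).
by have := Qp_horner_pred_lt p_pr le_pT (cs := mults nu); rewrite sum_mults big_map; apply.
Qed.

Lemma small_rem_radix p r s K (w : 'I_r -> nat -> nat) : prime p -> s <= K ->
  (forall i t, t < s -> w i t = 0) -> (forall t, \sum_i w i t < p) ->
  forall k, \sum_(c <- p ^ s :: [seq radix p K (w i) | i <- index_enum 'I_r]) c %% p ^ k.+1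
            <= p ^ k.+1.
Proof.
move=> p_pr le_sK w0 lt_wp k; rewrite big_cons big_map.
have p_gt0 := prime_gt0 p_pr.
have lt_w i t : w i t < p by rewrite (leq_ltn_trans _ (lt_wp t)) // (bigD1 i) ?leq_addr.
case: (ltnP k s) => [lt_ks|le_sk].
  rewrite (eqP (_ : p ^ k.+1 %| p ^ s)) ?dvdn_exp2l // add0n big1 ?expn_gt0 ?p_gt0 // => i _.
  apply/eqP; change (p ^ k.+1 %| radix p K (w i)).
  by apply: dvdn_trans (dvdn_radix p K (w0 i)); rewrite dvdn_exp2l.
set m := minn k.+1 K; have le_sm : s <= m by rewrite leq_min le_sK (leqW le_sk).
rewrite modn_small ?ltn_exp2l ?prime_gt1 // addnC.
apply: (@leq_trans (radix p m (fun t => (s <= t) * p.-1) + p ^ s)).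
  rewrite leq_add2r; apply: (@leq_trans (\sum_i radix p m (w i))).
    apply: leq_sum => i _; case: (leqP k.+1 K) => [le_kK|lt_Kk].
      by rewrite /m (minn_idPl le_kK) radix_mod // => t _; apply: lt_w.
    by rewrite /m (minn_idPr (ltnW lt_Kk)) leq_mod.
  rewrite radix_sum leq_radix // => t _; case: (leqP s t) => [le_st|lt_ts] /=.
    by rewrite mul1n -ltnS prednK.
  by rewrite big1 // => i _; apply: w0.
by rewrite radix_geom // leq_exp2l ?prime_gt1 // geq_minl.
Qed.

Section Construction.
Variables (p r : nat) (alpha : vecN r) (d : nat) (W : 'I_r -> nat).
Hypothesis p_pr : prime p.
Hypothesis alpha_neq0 : alpha != [ffun => 0].
Let s := logn p (vgcd alpha).
Hypothesis dvd_W : forall i, p ^ s %| W i.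
Hypothesis le_W : forall i, W i <= alpha i.
Hypothesis W_room : exists i, W i + p ^ s <= alpha i.
Hypothesis lt_d_W : d < p ^ s + \sum_i W i.
Hypothesis small_rem : forall k,
  \sum_(c <- p ^ s :: [seq W i | i <- index_enum 'I_r]) c %% p ^ k.+1 <= p ^ k.+1.

Let unit_vec i : vecN r := [ffun i' => (i' == i : nat)].
Let beta0 : vecN r := [ffun i => (alpha i - W i) %/ p ^ s].
Let kv := (beta0, p ^ s) :: [seq (unit_vec i, W i) | i <- index_enum 'I_r].
Let nu := fsfun_of_pairs kv.

Let beta0_decomp i : p ^ s * beta0 i + W i = alpha i.
Proof.
have dvd_alpha : p ^ s %| alpha i.
  by apply: dvdn_trans (dvdn_vgcd alpha i); apply: pfactor_dvdnn.
by rewrite ffunE mulnC divnK ?dvdn_sub // subnK.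
Qed.

Let sum_kv (g : vecN r -> nat) :
  \sum_(b <- finsupp nu) nu b * g b = p ^ s * g beta0 + \sum_i W i * g (unit_vec i).
Proof. by rewrite sum_fsfun_of_pairs big_cons big_map. Qed.

Let fsnorm_nu : fsnorm nu = p ^ s + \sum_i W i.
Proof.
rewrite /fsnorm (eq_bigr (fun b => nu b * 1)) => [|b _]; last by rewrite muln1.
by rewrite sum_kv muln1; under eq_bigr do rewrite muln1.
Qed.

Let nu_sum i : \sum_(b <- finsupp nu) nu b * b i = alpha i.
Proof.
rewrite sum_kv (bigD1 i) //= big1 => [|j ne_ji]; last first.
  by rewrite ffunE eq_sym (negPf ne_ji) muln0.
by rewrite addn0 [unit_vec i i]ffunE eqxx muln1 beta0_decomp.
Qed.

Let nu0 : nu [ffun => 0] = 0.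
Proof.
rewrite fsfun_of_pairsE big_cons big_map big1 /=.
  case: eqP => // beta0_0; have [i room_i] := W_room.
  have := beta0_decomp i; rewrite beta0_0 ffunE muln0 add0n.
  have : 0 < p ^ s by rewrite expn_gt0 prime_gt0.
  lia.
by move=> i /eqP /ffunP /(_ i); rewrite !ffunE eqxx.
Qed.

Lemma p_unit_factorization_of_parts : p_unit_factorization p alpha d.
Proof.
exists nu; have N_gt0 : 0 < fsnorm nu by rewrite fsnorm_nu addn_gt0 expn_gt0 prime_gt0.
split.
  by apply/and3P; split; [apply/eqP | apply/forallP => i; apply/eqP | rewrite fsnorm_nu].
apply/(ordp_multinom_eq0 _ p_pr N_gt0).
set cs := p ^ s :: [seq W i | i <- index_enum 'I_r].
have cs_kv : cs = [seq x.2 | x <- kv] by rewrite /cs /kv /= -map_comp.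
have sum_cs : \sum_(c <- cs) c = fsnorm nu by rewrite fsnorm_nu big_cons big_map.
have dvd_cs c : c \in cs -> p ^ s %| c.
  by rewrite inE => /orP[/eqP -> // | /mapP[i _ ->]].
have ndvd_ps : ~~ (p ^ s.+1 %| p ^ s) by rewrite dvdn_Pexp2l ?prime_gt1 // ltnn.
have := (logn_fact_sum_eqP p_pr dvd_cs (mem_head _ _) ndvd_ps).2 small_rem.
rewrite sum_cs cs_kv big_map.
have := logn_fact_pairs_le kv p_pr.
have := logn_fact_fsnorm_ge p_pr alpha_neq0 nu_sum.
have : s <= logn p (fsnorm nu).
  by rewrite -pfactor_dvdn // -sum_cs big_seq dvdn_sum.
rewrite -/s -/nu; lia.
Qed.

End Construction.

Lemma sum_delta_muln r (i0 : 'I_r) x : \sum_i (i == i0) * x = x.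
Proof. by rewrite (bigD1 i0) //= eqxx mul1n big1 ?addn0 // => i /negPf ->. Qed.

Lemma exists_sub_family r (A : 'I_r -> nat) m : m < \sum_i A i ->
  exists B : 'I_r -> nat, [/\ forall i, B i <= A i, \sum_i B i = m &
    exists i0, B i0 < A i0].
Proof.
elim: m => [|m IHm] lt_mA.
  exists (fun _ => 0); split => //; first by rewrite big1.
  have [i0 A_i0|A0] := pickP (fun i => 0 < A i); first by exists i0.
  by move: lt_mA; rewrite big1 // => i _; apply/eqP; rewrite eqn0Ngt A0.
have [B [le_BA sum_B [i0 lt_B]]] := IHm (ltnW lt_mA).
exists (fun i => B i + (i == i0)); split.
- by move=> i; case: eqP => [->|_]; rewrite ?addn1 ?addn0.
- rewrite big_split /= sum_B (eq_bigr (fun i => (i == i0) * 1)) ?sum_delta_muln ?addn1 //.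
  by move=> i _; rewrite muln1.
have [i1 lt_B'|le_AB] := pickP (fun i => B i + (i == i0) < A i); first by exists i1.
move: lt_mA; rewrite ltnNge => /negP[]; rewrite -addn1 -sum_B -(sum_delta_muln i0 1).
by rewrite -big_split leq_sum // => i _; rewrite muln1 leqNgt le_AB.
Qed.

Section Backward.
Variables (p r : nat) (alpha : vecN r) (d : nat).
Hypothesis p_pr : prime p.
Let s := logn p (vgcd alpha).
Let K := (vnorm alpha + d).+1.
Let a i := digit p (alpha i).
Let c t := \sum_i a i t.

Let p_gt0 : 0 < p. Proof. exact: prime_gt0. Qed.

Let lt_alpha_K i : alpha i < K.
Proof. by rewrite ltnS (leq_trans (leq_vnorm alpha i)) ?leq_addr. Qed.

Let radix_a i : radix p K (a i) = alpha i.
Proof. exact/radix_digit/ltn_pexp/ltnW/lt_alpha_K. Qed.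

Let radix_d : radix p K (digit p d) = d.
Proof. by apply/radix_digit/ltn_pexp; rewrite // ltnW // ltnS leq_addl. Qed.

Lemma radix_lex_of_poly_gt : poly_gt (Qpv p alpha) (Qp p d) ->
  exists2 j, j < K & digit p d j < c j /\ forall t, j < t < K -> digit p d t = c t.
Proof.
(* [T] exceeds [N], every digit and every column sum. *)
move=> [N gtN]; set T := `|N| + r * p + p.
have lt_cT t : c t < T.
  suff : c t <= r * p by rewrite /T; lia.
  rewrite -[r in r * p]card_ord -sum_nat_const.
  by apply: leq_sum => i _; apply/ltnW/digit_lt.
have Qp_d : ((Qp p d).[Posz T] = (radix T K (digit p d))%:Z)%R.
  by apply: Qp_horner_radix; rewrite // ltnS leq_addl.
have Qp_alpha i : ((Qp p (alpha i)).[Posz T] = (radix T K (a i))%:Z)%R.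
  exact: Qp_horner_radix.
have le_NT : (N <= Posz T)%R.
  by rewrite (le_trans (ler_norm N)) // -abszE lez_nat /T -addnA leq_addr.
have := gtN _ le_NT; rewrite Qp_d /Qpv horner_sum (eq_bigr _ (fun i _ => Qp_alpha i)).
rewrite -Posz_sum ltz_nat radix_sum; apply: radix_lt_lex => //; first by rewrite /T; lia.
  by move=> t _; rewrite (leq_trans (digit_lt _ _ _)) // /T; lia.
by move=> t _; apply: lt_cT.
Qed.

Hypothesis alpha_neq0 : alpha != [ffun => 0].
Variables (j : nat) (B : 'I_r -> nat) (i0 : 'I_r).
Hypothesis lt_jK : j < K.
Hypothesis lt_dc : digit p d j < c j.
Hypothesis eq_dc : forall t, j < t < K -> digit p d t = c t.
Hypothesis le_B : forall i, B i <= a i j.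
Hypothesis sum_B : \sum_i B i = (minn (c j) p).-1.
Hypothesis lt_B : B i0 < a i0 j.

Let a_low i t : t < s -> a i t = 0.
Proof. by apply: digit_dvd; apply: dvdn_trans (dvdn_vgcd alpha i); apply: pfactor_dvdnn. Qed.

Let le_sj : s <= j.
Proof.
rewrite leqNgt; apply/negP => lt_js.
by move: lt_dc; rewrite /c big1 // => i _; apply: a_low.
Qed.

Let lt_c_hi t : j < t -> c t < p.
Proof.
move=> lt_jt; case: (ltnP t K) => [lt_tK|le_Kt]; first by rewrite -eq_dc ?lt_jt ?digit_lt.
by rewrite /c big1 // => i _; apply/digit_small/ltn_pexp/(leq_trans (ltnW (lt_alpha_K i))).
Qed.

Let chain t := (s <= t < j) * p.-1.
Let w i t := (j < t) * a i t + B i * (t == j) + (i == i0) * chain t.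
Let W i := radix p K (w i).

Let w_low i t : t < s -> w i t = 0.
Proof.
move=> lt_ts; rewrite /w /chain a_low // (leqNgt s t) lt_ts (ltn_eqF (leq_trans lt_ts le_sj)).
by rewrite !muln0.
Qed.

Let chain_geom : radix p K chain + p ^ s = p ^ j.
Proof.
rewrite (@radix_trunc p j K chain (ltnW lt_jK)) => [|t /andP[le_jt _]]; last first.
  by rewrite /chain ltnNge le_jt andbF.
rewrite -(radix_geom p_gt0 le_sj); congr (_ + _); apply: eq_radix => t lt_tj.
by rewrite /chain lt_tj andbT.
Qed.

Let radix_w i :
  W i = radix p K (fun t => (j < t) * a i t) + B i * p ^ j + (i == i0) * radix p K chain.
Proof. by rewrite /W /w !radixD !radixMn radix_delta. Qed.

Let le_W i : W i + (i == i0) * p ^ s <= alpha i.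
Proof.
rewrite radix_w -addnA -mulnDr chain_geom -addnA -mulnDl -[X in _ <= X]radix_a.
apply: (@leq_trans (radix p K (fun t => (j < t) * a i t + a i j * (t == j)))).
  rewrite radixD radixMn radix_delta // leq_add2l leq_mul2r; apply/orP; right.
  by case: eqP => [->|_]; rewrite ?addn1 ?addn0.
apply: leq_radix => t _.
by case: (ltngtP j t) => [lt_jt|lt_tj|->]; rewrite /= ?muln0 ?addn0 ?mul1n ?muln1.
Qed.

Let lt_col t : \sum_i w i t < p.
Proof.
rewrite /w !big_split /= -big_distrr -big_distrl sum_delta_muln /= sum_B -/(c t).
rewrite /chain; case: (ltngtP j t) => [lt_jt|lt_tj|->] /=;
  rewrite ?muln0 ?addn0 ?mul0n ?add0n ?andbF ?mul0n.
- by rewrite mul1n addn0 lt_c_hi.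
- by rewrite andbT; case: (s <= t); rewrite /= ?mul1n ?mul0n ?ltn_predL.
- by rewrite muln1 addn0; have := geq_minr (c t) p; lia.
Qed.

Let lt_d_W : d < p ^ s + \sum_i W i.
Proof.
set m := (minn (c j) p).-1.
have -> : p ^ s + \sum_i W i = radix p K (fun t => (j < t) * c t + m.+1 * (t == j)).
  rewrite radixD radixMn radix_delta // (eq_bigr _ (fun i _ => radix_w i)) !big_split /=.
  rewrite -big_distrl sum_B sum_delta_muln radix_sum.
  rewrite (@eq_radix p K (fun t => \sum_i (j < t) * a i t) (fun t => (j < t) * c t)).
    by rewrite mulSn /= -/m; have := chain_geom; lia.
  by move=> t _; rewrite big_distrr.
rewrite -[X in X < _]radix_d; apply: (lex_radix_lt p_gt0 _ lt_jK) => [t _||t /andP[lt_jt lt_tK]].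
- exact: digit_lt.
- rewrite ltnn eqxx mul0n muln1 add0n /m prednK ?leq_min ?lt_dc ?digit_lt //.
  by rewrite (leq_ltn_trans _ lt_dc) ?prime_gt0.
- by rewrite lt_jt mul1n eq_dc ?lt_jt // (gtn_eqF lt_jt) muln0 addn0.
Qed.

Lemma p_unit_factorization_of_lex : p_unit_factorization p alpha d.
Proof.
apply: (@p_unit_factorization_of_parts p r alpha d W p_pr alpha_neq0) => //.
- by move=> i; apply: dvdn_radix => t; apply: w_low.
- by move=> i; apply: leq_trans (le_W i); apply: leq_addr.
- by exists i0; have := le_W i0; rewrite eqxx mul1n.
- exact: (small_rem_radix p_pr (leq_trans le_sj (ltnW lt_jK)) w_low lt_col).
Qed.

End Backward.

Lemma p_unit_factorization_of_poly_gt r (alpha : vecN r) d p :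
  prime p -> alpha != [ffun => 0] ->
  poly_gt (Qpv p alpha) (Qp p d) -> p_unit_factorization p alpha d.
Proof.
move=> p_pr alpha_neq0 /(radix_lex_of_poly_gt p_pr) [j lt_jK [lt_dc eq_dc]].
have lt_m : (minn (\sum_i digit p (alpha i) j) p).-1 < \sum_i digit p (alpha i) j.
  have c_gt0 := leq_ltn_trans (leq0n _) lt_dc.
  by rewrite prednK ?geq_minl // leq_min c_gt0 prime_gt0.
have [B [le_B sum_B [i0 lt_B]]] := exists_sub_family lt_m.
exact: (p_unit_factorization_of_lex p_pr alpha_neq0 lt_jK lt_dc eq_dc le_B sum_B lt_B).
Qed.

Theorem lemma2p10 (r : nat) (hr : (0 < r)%N) (alpha : vecN r)
    (halpha : alpha != [ffun => 0%N]) (d : nat) (hd : (d < vnorm alpha)%N)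
    (p : nat) (hp : prime p) :
  let s := logn p (vgcd alpha) in
  (exists nu : fsN r, S_set alpha d nu /\
     ordp p (((p ^ s)%N%:R * multinom nu) / (fsnorm nu)%:R) = 0%R)
  <-> poly_gt (Qpv p alpha) (Qp p d).
Proof.
move=> s; split; first exact: poly_gt_of_p_unit_factorization.
exact: p_unit_factorization_of_poly_gt.
Qed.
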